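(* Given $\beta_0,\beta_1,\ldots\in\omega^\omega$, there exists $\alpha\in\omega^\omega$ such that for every continuous injective group homomorphism $\Phi:S_\infty\to S_\infty$ we have $\Phi(K_\alpha)\not\subseteq\bigcup_n K_{\beta_n}$.
   Context: $S_\infty$ is the group of all permutations of $\omega$ with the topology of pointwise convergence. For $\alpha\in\omega^\omega$, $K_\alpha=\{f\in S_\infty: f\le\alpha \text{ and } f^{-1}\le\alpha\}$, where $f\le\alpha$ means $f(n)\le\alpha(n)$ for all $n\in\omega$. *)

From Stdlib Require Import Arith.

Record Sinf : Type := MkSinf {
  pfun :> nat -> nat;
  pinv : nat -> nat;
  pfunK : forall n, pinv (pfun n) = n;
  pinvK : forall n, pfun (pinv n) = n
}.

Definition fle (f alpha : nat -> nat) : Prop := forall n, f n <= alpha n.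

Definition inK (alpha : nat -> nat) (f : Sinf) : Prop :=
  fle (pfun f) alpha /\ fle (pinv f) alpha.

Definition is_hom (Phi : Sinf -> Sinf) : Prop :=
  forall f g h : Sinf, (forall n, h n = f (g n)) ->
    forall n, Phi h n = Phi f (Phi g n).

(* Injectivity (elements of S_inf are equal iff they agree pointwise). *)
Definition is_inj (Phi : Sinf -> Sinf) : Prop :=
  forall f g : Sinf, (forall n, Phi f n = Phi g n) -> forall n, f n = g n.

(* Continuity for the topology of pointwise convergence: each coordinate of
   Phi f depends only on finitely many values of f, locally around f. *)
Definition is_cont (Phi : Sinf -> Sinf) : Prop :=
  forall (f : Sinf) (n : nat), exists N : nat,
    forall g : Sinf, (forall k, k < N -> g k = f k) -> Phi g n = Phi f n.

From Stdlib Require Import Arith Lia List Classical ClassicalEpsilon.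

(* Continuity and injectivity of Phi give a point y and an index c such that
   the transpositions (c d), d > c, send y under Phi to pairwise distinct
   points; conjugation by (c d) transports this to the pair (Phi (c d) y, d).
   Suppose, for a permutation Q, that Q o Phi (c d) and its inverse were
   bounded by b whenever L <= c < d <= alpha c.  Stepping along d = alpha c
   keeps y and Q y below iterates of a majorant of b while c grows, so
   eventually the alpha c - c distinct points Phi (c d) y would all lie below
   a bound smaller than alpha c - c.  Hence for every permutation P, every m
   and L there is a transposition (c d) with L <= c < d <= alpha c moving
   Phi (P (c d)) out of K_(beta m); composing such transpositions, each placed
   beyond the continuity modulus of the previous witness, gives f in K_alpha
   with Phi f in no K_(beta m). *)

Definition trf (a b n : nat) : nat :=
  if Nat.eqb n a then b else if Nat.eqb n b then a else n.

Ltac trf_cases := unfold trf;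
  repeat (match goal with |- context [Nat.eqb ?x ?y] => is_var x; is_var y;
            destruct (Nat.eqb_spec x y); cbn end); lia.

Lemma trf_invol a b n : trf a b (trf a b n) = n.
Proof. trf_cases. Qed.

Lemma trf_sym a b n : trf a b n = trf b a n.
Proof. trf_cases. Qed.

Lemma trf_l a b : trf a b a = b.
Proof. trf_cases. Qed.

Lemma trf_r a b : trf a b b = a.
Proof. trf_cases. Qed.

Lemma trf_out a b n : n <> a -> n <> b -> trf a b n = n.
Proof. trf_cases. Qed.

Lemma trf_conj a b c n : a <> b -> b <> c -> a <> c ->
  trf a b (trf b c (trf a b n)) = trf a c n.
Proof. trf_cases. Qed.

Lemma trf_comm a b c d n : a <> c -> a <> d -> b <> c -> b <> d ->
  trf a b (trf c d n) = trf c d (trf a b n).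
Proof. trf_cases. Qed.

Definition idS : Sinf := MkSinf (fun n => n) (fun n => n) (fun _ => eq_refl) (fun _ => eq_refl).

Definition trS (a b : nat) : Sinf := MkSinf (trf a b) (trf a b) (trf_invol a b) (trf_invol a b).

Lemma comp_pfunK (f g : Sinf) n : pinv g (pinv f (f (g n))) = n.
Proof. now rewrite !pfunK. Qed.

Lemma comp_pinvK (f g : Sinf) n : f (g (pinv g (pinv f n))) = n.
Proof. now rewrite !pinvK. Qed.

Definition compS (f g : Sinf) : Sinf :=
  MkSinf (fun n => f (g n)) (fun n => pinv g (pinv f n)) (comp_pfunK f g) (comp_pinvK f g).

Section Homomorphism.

Variable Phi : Sinf -> Sinf.
Hypothesis Phi_hom : is_hom Phi.

Lemma Phi_id n : Phi idS n = n.
Proof.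
  pose proof (Phi_hom idS idS idS (fun _ => eq_refl) n) as E.
  apply (f_equal (pinv (Phi idS))) in E. now rewrite !pfunK in E.
Qed.

Lemma Phi_ext (h h' : Sinf) : (forall n, h n = h' n) -> forall n, Phi h n = Phi h' n.
Proof. intros E n. now rewrite (Phi_hom h' idS h E n), Phi_id. Qed.

Lemma Phi_comp f g n : Phi (compS f g) n = Phi f (Phi g n).
Proof. exact (Phi_hom f g (compS f g) (fun _ => eq_refl) n). Qed.

Lemma Phi_tr_invol a b x : Phi (trS a b) (Phi (trS a b) x) = x.
Proof.
  rewrite <- Phi_comp, (Phi_ext _ idS); [apply Phi_id|].
  intro n; apply trf_invol.
Qed.

Lemma Phi_tr_sym a b x : Phi (trS a b) x = Phi (trS b a) x.
Proof. apply Phi_ext; intro n; apply trf_sym. Qed.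

Lemma Phi_tr_conj a b c x : a <> b -> b <> c -> a <> c ->
  Phi (trS a b) (Phi (trS b c) (Phi (trS a b) x)) = Phi (trS a c) x.
Proof.
  intros; rewrite <- !Phi_comp; apply Phi_ext; intro n; now apply trf_conj.
Qed.

Lemma Phi_tr_comm a b c d x : a <> c -> a <> d -> b <> c -> b <> d ->
  Phi (trS a b) (Phi (trS c d) x) = Phi (trS c d) (Phi (trS a b) x).
Proof.
  intros; rewrite <- !Phi_comp; apply Phi_ext; intro n; now apply trf_comm.
Qed.

Definition tr_injective (y c : nat) : Prop :=
  forall d d', c < d -> c < d' -> d <> d' -> Phi (trS c d) y <> Phi (trS c d') y.

Definition stabilized (y N : nat) : Prop :=
  forall g : Sinf, (forall k, k < N -> g k = k) -> Phi g y = y.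

Lemma tr_injective_shift y c d : tr_injective y c -> c < d ->
  tr_injective (Phi (trS c d) y) d.
Proof.
  intros inj cd e e' de de' ne E; apply (inj e e'); try lia.
  rewrite <- (Phi_tr_conj c d e), <- (Phi_tr_conj c d e') by lia.
  now rewrite E.
Qed.

Lemma stabilized_tr y N a b : stabilized y N -> N <= a -> N <= b -> Phi (trS a b) y = y.
Proof. intros st ha hb; apply st; intros k hk; apply trf_out; lia. Qed.

Lemma tr_constant_of_not_injective y c : stabilized y (S c) -> ~ tr_injective y c ->
  forall e, c < e -> Phi (trS c e) y = Phi (trS c (S c)) y.
Proof.
  intros st ninj.
  assert (const : exists d, forall e, c < e -> Phi (trS c e) y = Phi (trS c d) y).
  { apply NNPP; intro nconst; apply ninj; intros d d' hd hd' ne E.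
    apply nconst; exists d; intros e he.
    destruct (Nat.eq_dec e d) as [->|ned]; [reflexivity|].
    destruct (Nat.eq_dec e d') as [->|ned']; [now rewrite E|].
    (* (c e) is the conjugate of (c d) by (d e), and (d e) fixes y *)
    rewrite Phi_tr_sym, <- (Phi_tr_conj e d c) by lia.
    rewrite (stabilized_tr y (S c) e d), (Phi_tr_sym d c), E by (auto; lia).
    rewrite <- Phi_tr_comm by lia.
    now rewrite (stabilized_tr y (S c) e d) by (auto; lia). }
  destruct const as [d const]; intros e he.
  now rewrite (const e he), (const (S c)) by lia.
Qed.

Lemma tr_fixes_of_not_injective y c : stabilized y (S c) -> ~ tr_injective y c ->
  forall e, c < e -> Phi (trS c e) y = y.
Proof.
  intros st ninj e he.
  pose proof (tr_constant_of_not_injective y c st ninj) as const.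
  (* (c+1 c+2) = (c+1 c)(c c+2)(c+1 c) fixes y *)
  assert (E := stabilized_tr y (S c) (S c) (S (S c)) st (le_n _) (Nat.le_succ_diag_r _)).
  rewrite <- (Phi_tr_conj (S c) c (S (S c))), <- !(Phi_tr_sym c (S c)) in E by lia.
  rewrite <- (const (S (S c))), Phi_tr_invol in E by lia.
  now rewrite const, E.
Qed.

Lemma stabilized_pred y c : stabilized y (S c) ->
  (forall e, c < e -> Phi (trS c e) y = y) -> stabilized y c.
Proof.
  intros st fix_tr g hg.
  destruct (Nat.eq_dec (g c) c) as [gc|gc].
  { apply st; intros k hk; destruct (Nat.eq_dec k c) as [->|]; auto; apply hg; lia. }
  assert (ce : c < g c).
  { apply Nat.nle_gt; intro le.
    assert (g c = g (g c)) as E by (symmetry; apply hg; lia).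
    apply (f_equal (pinv g)) in E; rewrite !pfunK in E; lia. }
  set (g' := compS (trS c (g c)) g).
  assert (hg' : forall k, k < S c -> g' k = k).
  { intros k hk; cbn; destruct (Nat.eq_dec k c) as [->|nk].
    - unfold trf; rewrite Nat.eqb_refl; destruct (Nat.eqb_spec (g c) c); lia.
    - rewrite (hg k) by lia; apply trf_out; lia. }
  rewrite (Phi_ext g (compS (trS c (g c)) g')) by (intro n; cbn; now rewrite trf_invol).
  now rewrite Phi_comp, (st g' hg'), fix_tr.
Qed.

Lemma tr_injective_of_stabilized y N : (exists g, Phi g y <> y) -> stabilized y N ->
  exists c, tr_injective y c.
Proof.
  intros [g hg]; induction N as [|c IH]; intros st.
  - exfalso; apply hg, st; intros; lia.
  - destruct (classic (tr_injective y c)) as [inj|ninj]; eauto.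
    apply IH, stabilized_pred, tr_fixes_of_not_injective; auto.
Qed.

End Homomorphism.

Lemma exists_tr_injective Phi L : is_hom Phi -> is_inj Phi -> is_cont Phi ->
  exists y c, L <= c /\ tr_injective Phi y c.
Proof.
  intros hom inj cont.
  assert (moved : exists y, Phi (trS 0 1) y <> y).
  { apply NNPP; intro nm.
    assert (trS 0 1 0 = idS 0) as E; [|discriminate E].
    apply inj; intro n; rewrite Phi_id by auto; apply NNPP; eauto. }
  destruct moved as [y hy]; destruct (cont idS y) as [N HN].
  destruct (tr_injective_of_stabilized Phi hom y N) as [c inj_c]; eauto.
  { intros g hg; rewrite (HN g hg); apply Phi_id; auto. }
  exists (Phi (trS c (S (c + L))) y), (S (c + L)); split; [lia|].
  apply tr_injective_shift; auto; lia.
Qed.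
Fixpoint max_upto (F : nat -> nat) (n : nat) : nat :=
  match n with 0 => F 0 | S k => Nat.max (max_upto F k) (F (S k)) end.

Lemma max_upto_ge F i n : i <= n -> F i <= max_upto F n.
Proof.
  induction n as [|n IH]; intros hi; cbn.
  - now replace i with 0 by lia.
  - destruct (Nat.eq_dec i (S n)) as [->|]; [lia|]; specialize (IH ltac:(lia)); lia.
Qed.

Lemma max_upto_mono F G n n' : (forall i, F i <= G i) -> n <= n' ->
  max_upto F n <= max_upto G n'.
Proof.
  intros hFG; induction 1 as [|n' _ IH]; cbn; [|lia].
  induction n as [|n IHn]; cbn; auto; specialize (hFG (S n)); lia.
Qed.

Definition majorant (beta : nat -> nat -> nat) (x : nat) : nat :=
  x + max_upto (fun j => max_upto (beta j) x) x.

Lemma majorant_mono beta x y : x <= y -> majorant beta x <= majorant beta y.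
Proof.
  intros h; unfold majorant.
  enough (max_upto (fun j => max_upto (beta j) x) x <=
          max_upto (fun j => max_upto (beta j) y) y) by lia.
  apply max_upto_mono; auto; intro j; now apply max_upto_mono.
Qed.

Lemma majorant_ge beta j i x : j <= x -> i <= x -> beta j i <= majorant beta x.
Proof.
  intros hj hi; unfold majorant.
  pose proof (max_upto_ge (beta j) i x hi).
  pose proof (max_upto_ge (fun j => max_upto (beta j) x) j x hj); cbn in *; lia.
Qed.

Definition growth (beta : nat -> nat -> nat) (c : nat) : nat :=
  Nat.iter (S c) (fun v => majorant beta (v + c)) c.

Definition alpha_of (beta : nat -> nat -> nat) (c : nat) : nat := c + 2 + growth beta c.

Lemma iter_le_growth beta m k x c : m <= c -> k <= S c -> x <= c ->
  Nat.iter k (fun v => majorant beta (v + m)) x <= growth beta c.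
Proof.
  intros hm hk hx.
  assert (mono : Nat.iter k (fun v => majorant beta (v + m)) x <=
                 Nat.iter k (fun v => majorant beta (v + c)) c).
  { induction k as [|k IH]; [exact hx|].
    rewrite !Nat.iter_succ; apply majorant_mono; specialize (IH ltac:(lia)); lia. }
  assert (more : forall j, Nat.iter k (fun v => majorant beta (v + c)) c <=
                           Nat.iter (j + k) (fun v => majorant beta (v + c)) c).
  { induction j as [|j IH]; [reflexivity|].
    rewrite Nat.add_succ_l, Nat.iter_succ; unfold majorant at 2; lia. }
  unfold growth; replace (S c) with (S c - k + k) by lia.
  eapply Nat.le_trans; [exact mono|apply more].
Qed.

Lemma pigeonhole (v : nat -> nat) n b : (forall i, i < n -> v i <= b) ->
  (forall i j, i < n -> j < n -> v i = v j -> i = j) -> n <= S b.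
Proof.
  intros hb hinj.
  assert (nodup : NoDup (map v (seq 0 n))).
  { apply NoDup_map_NoDup_ForallPairs; [|apply seq_NoDup].
    intros i j hi hj; apply in_seq in hi, hj; apply hinj; lia. }
  assert (incl_b : incl (map v (seq 0 n)) (seq 0 (S b))).
  { intros x hx; apply in_map_iff in hx as (i & <- & hi); apply in_seq in hi.
    apply in_seq; specialize (hb i ltac:(lia)); lia. }
  pose proof (NoDup_incl_length nodup incl_b) as len.
  now rewrite length_map, !length_seq in len.
Qed.

Definition escapes (b : nat -> nat) (h : Sinf) (w : nat) : Prop :=
  b w < h w \/ b (h w) < w.

Lemma escapes_not_inK b h w : escapes b h w -> ~ inK b h.
Proof.
  intros [e|e] [hle hinv]; [specialize (hle w)|specialize (hinv (h w)); rewrite pfunK in hinv]; lia.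
Qed.

Definition peak (Q : Sinf) (y : nat) : nat := Nat.max y (Q y).

Section Stage.

Variables (Phi : Sinf -> Sinf) (Q : Sinf) (alpha b B : nat -> nat) (L : nat).
Hypothesis Phi_hom : is_hom Phi.
Hypothesis alpha_gt : forall c, c < alpha c.
Hypothesis B_mono : forall x y, x <= y -> B x <= B y.
Hypothesis b_le_B : forall x, b x <= B x.
Hypothesis no_escape : forall c d w, L <= c -> c < d -> d <= alpha c ->
  ~ escapes b (compS Q (Phi (trS c d))) w.

Lemma no_escape_bounds c d w : L <= c -> c < d -> d <= alpha c ->
  Q (Phi (trS c d) w) <= b w /\ w <= b (Q (Phi (trS c d) w)).
Proof. intros h1 h2 h3; pose proof (no_escape c d w h1 h2 h3); unfold escapes in *; cbn in *; lia. Qed.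

Lemma tr_injective_step y c : tr_injective Phi y c -> L <= c ->
  tr_injective Phi (Phi (trS c (alpha c)) y) (alpha c) /\
  peak Q (Phi (trS c (alpha c)) y) <= B (peak Q y).
Proof.
  intros inj hc; split; [apply tr_injective_shift; auto|].
  destruct (no_escape_bounds c (alpha c) y) as [bound_Q _]; auto.
  destruct (no_escape_bounds c (alpha c) (Phi (trS c (alpha c)) y)) as [_ bound_y]; auto.
  rewrite Phi_tr_invol in bound_y by auto.
  pose proof (b_le_B y); pose proof (b_le_B (Q y)).
  pose proof (B_mono y (peak Q y)); pose proof (B_mono (Q y) (peak Q y)).
  unfold peak in *; lia.
Qed.

Lemma tr_injective_iter y0 c0 : tr_injective Phi y0 c0 -> L <= c0 -> forall k,
  exists y c, tr_injective Phi y c /\ k + c0 <= c /\ peak Q y <= Nat.iter k B (peak Q y0).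
Proof.
  intros inj0 hc0; induction k as [|k (y & c & inj & hc & hy)].
  - exists y0, c0; cbn; auto.
  - destruct (tr_injective_step y c) as [inj' hy']; auto; [lia|].
    exists (Phi (trS c (alpha c)) y), (alpha c); split; auto.
    rewrite Nat.iter_succ; specialize (alpha_gt c); specialize (B_mono _ _ hy); lia.
Qed.

(* The [alpha c - c] images of [y] under the (c d), d in (c, alpha c], are
   distinct but bounded by [B (peak Q y)]. *)
Lemma tr_injective_gap y c : tr_injective Phi y c -> L <= c ->
  alpha c < c + 2 + B (peak Q y).
Proof.
  intros inj hc; apply Nat.nle_gt; intro gap.
  enough (2 + B (peak Q y) <= S (B (peak Q y))) by lia.
  apply (pigeonhole (fun i => Phi (trS c (c + 1 + i)) y)).
  - intros i hi.
    destruct (no_escape_bounds c (c + 1 + i) (Phi (trS c (c + 1 + i)) y)) as [_ bound];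
      try lia.
    rewrite Phi_tr_invol in bound by auto.
    pose proof (b_le_B (Q y)); pose proof (B_mono (Q y) (peak Q y)); unfold peak in *; lia.
  - intros i j hi hj E; apply NNPP; intro ne; apply (inj (c + 1 + i) (c + 1 + j)); auto; lia.
Qed.

End Stage.

Lemma stage Phi beta (Q : Sinf) m L : is_hom Phi -> is_inj Phi -> is_cont Phi ->
  exists c d w, L <= c /\ c < d /\ d <= alpha_of beta c /\
    escapes (beta m) (compS Q (Phi (trS c d))) w.
Proof.
  intros hom inj cont; apply NNPP; intro no_escape.
  set (B := fun x => majorant beta (x + m)).
  assert (B_mono : forall x y, x <= y -> B x <= B y) by (intros; apply majorant_mono; lia).
  assert (b_le_B : forall x, beta m x <= B x) by (intros; apply majorant_ge; lia).
  assert (alpha_gt : forall c, c < alpha_of beta c) by (intro; unfold alpha_of; lia).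
  assert (no_escape' : forall c d w, L <= c -> c < d -> d <= alpha_of beta c ->
    ~ escapes (beta m) (compS Q (Phi (trS c d))) w) by eauto 10.
  destruct (exists_tr_injective Phi L hom inj cont) as (y0 & c0 & hc0 & inj0).
  set (k := peak Q y0 + m).
  destruct (tr_injective_iter Phi Q (alpha_of beta) (beta m) B L hom alpha_gt B_mono b_le_B
              no_escape' y0 c0 inj0 hc0 k) as (y & c & inj_c & hc & hy).
  pose proof (tr_injective_gap Phi Q (alpha_of beta) (beta m) B L hom B_mono b_le_B
                no_escape' y c inj_c ltac:(lia)) as gap.
  (* the [k] steps of the chain pushed [c] past everything [B] was built from *)
  assert (B (peak Q y) <= growth beta c).
  { eapply Nat.le_trans; [apply B_mono, hy|].
    apply (iter_le_growth beta m (S k)); unfold k in *; lia. }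
  unfold alpha_of in gap; lia.
Qed.

Lemma Sinf_limit (P : nat -> Sinf) (L : nat -> nat) : (forall m, m <= L m) ->
  (forall j M n, j <= M -> n < L j -> P M n = P j n /\ pinv (P M) n = pinv (P j) n) ->
  exists f : Sinf, forall m n, n < L m -> f n = P m n /\ pinv f n = pinv (P m) n.
Proof.
  intros hL agree.
  assert (stable : forall m n, n < L m ->
    P (S n) n = P m n /\ pinv (P (S n)) n = pinv (P m) n).
  { intros m n hn; destruct (Nat.le_ge_cases (S n) m) as [le|ge].
    - destruct (agree (S n) m n le) as [-> ->]; auto; specialize (hL (S n)); lia.
    - now apply agree. }
  assert (FK : forall n, pinv (P (S (P (S n) n))) (P (S n) n) = n).
  { intro n; set (M := S (n + P (S n) n)); specialize (hL M).
    destruct (stable M n) as [E _]; [lia|].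
    destruct (stable M (P (S n) n)) as [_ ->]; [lia|].
    now rewrite E, pfunK. }
  assert (FiK : forall n, P (S (pinv (P (S n)) n)) (pinv (P (S n)) n) = n).
  { intro n; set (M := S (n + pinv (P (S n)) n)); specialize (hL M).
    destruct (stable M n) as [_ E]; [lia|].
    destruct (stable M (pinv (P (S n)) n)) as [-> _]; [lia|].
    now rewrite E, pinvK. }
  exists (MkSinf (fun n => P (S n) n) (fun n => pinv (P (S n)) n) FK FiK).
  exact stable.
Qed.

Definition fixes_above (P : Sinf) (L : nat) : Prop := forall x, L <= x -> P x = x.

Lemma fixes_above_pinv P L x : fixes_above P L -> L <= x -> pinv P x = x.
Proof. intros fix_P hx; rewrite <- (fix_P x hx) at 1; apply pfunK. Qed.

Lemma fixes_above_lt_pinv P L x : fixes_above P L -> x < L -> pinv P x < L.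
Proof.
  intros fix_P hx; apply Nat.nle_gt; intro le.
  rewrite <- (pinvK P x), (fix_P _ le) in hx; lia.
Qed.

Lemma comp_tr_fixes_above P L L' c d : fixes_above P L -> L <= c -> c < d -> d < L' ->
  fixes_above (compS P (trS c d)) L'.
Proof. intros fix_P hc hd hL' x hx; cbn; rewrite trf_out by lia; apply fix_P; lia. Qed.

Lemma comp_tr_agree P L c d n : fixes_above P L -> L <= c -> c < d -> n < L ->
  compS P (trS c d) n = P n /\ pinv (compS P (trS c d)) n = pinv P n.
Proof.
  intros fix_P hc hd hn; cbn; rewrite !trf_out; auto;
    pose proof (fixes_above_lt_pinv P L n fix_P hn); lia.
Qed.

Lemma inK_comp_tr alpha P L c d : (forall x, x <= alpha x) -> inK alpha P ->
  fixes_above P L -> L <= c -> c < d -> d <= alpha c -> inK alpha (compS P (trS c d)).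
Proof.
  intros alpha_infl [hP hPi] fix_P hc hd had.
  assert (alpha_d : c <= alpha d) by (specialize (alpha_infl d); lia).
  split; intro n; cbn.
  - destruct (Nat.eq_dec n c) as [->|nc]; [|destruct (Nat.eq_dec n d) as [->|nd]].
    + rewrite trf_l, fix_P; lia.
    + rewrite trf_r, fix_P; lia.
    + rewrite trf_out; auto.
  - destruct (Nat.eq_dec n c) as [->|nc]; [|destruct (Nat.eq_dec n d) as [->|nd]].
    + rewrite (fixes_above_pinv P L c), trf_l; auto.
    + rewrite (fixes_above_pinv P L d), trf_r; auto; lia.
    + assert (pinv P n <> c /\ pinv P n <> d) as [pc pd].
      { split; intro E; [apply nc|apply nd]; rewrite <- (pinvK P n), E; apply fix_P; lia. }
      rewrite trf_out; auto.
Qed.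

Definition tr_extension (alpha : nat -> nat) (s s' : Sinf * nat) : Prop :=
  exists c d, snd s <= c /\ c < d /\ d <= alpha c /\
    fst s' = compS (fst s) (trS c d) /\ d < snd s'.

Section Extension.

Variables (alpha : nat -> nat) (s : nat -> Sinf * nat).
Hypothesis alpha_infl : forall x, x <= alpha x.
Hypothesis s0 : s 0 = (idS, 0).
Hypothesis s_ext : forall m, tr_extension alpha (s m) (s (S m)).

Lemma extension_invariant m :
  fixes_above (fst (s m)) (snd (s m)) /\ inK alpha (fst (s m)) /\ m <= snd (s m).
Proof.
  induction m as [|m (fix_m & K_m & hm)].
  - rewrite s0; split; [intros x _; reflexivity|].
    split; [split; intro n; apply alpha_infl|]; cbn; auto.
  - destruct (s_ext m) as (c & d & hc & hd & had & -> & hL); split; [|split].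
    + eapply comp_tr_fixes_above; eauto.
    + eapply inK_comp_tr; eauto.
    + lia.
Qed.

Lemma extension_agree j M n : j <= M -> n < snd (s j) ->
  snd (s j) <= snd (s M) /\
  fst (s M) n = fst (s j) n /\ pinv (fst (s M)) n = pinv (fst (s j)) n.
Proof.
  intros hjM hn; induction hjM as [|M _ (hL & agree & agree_inv)]; auto.
  destruct (s_ext M) as (c & d & hc & hd & had & E & hL'); rewrite E.
  destruct (comp_tr_agree (fst (s M)) (snd (s M)) c d n) as [-> ->]; try lia.
  apply extension_invariant.
Qed.

Lemma extension_limit :
  exists f : Sinf, inK alpha f /\ forall m n, n < snd (s m) -> f n = fst (s m) n.
Proof.
  destruct (Sinf_limit (fun m => fst (s m)) (fun m => snd (s m))) as [f agree].
  - apply extension_invariant.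
  - intros j M n hjM hn; apply extension_agree; auto.
  - exists f; split; [|intros m n hn; apply agree, hn].
    split; intro n; destruct (extension_invariant (S n)) as (_ & [hP hPi] & hn);
      destruct (agree (S n) n) as [E Ei]; try lia; [rewrite E|rewrite Ei]; auto.
Qed.

End Extension.

Lemma dependent_choice {A : Type} (R : nat -> A -> A -> Prop) (a0 : A) :
  (forall n a, exists a', R n a a') ->
  exists s : nat -> A, s 0 = a0 /\ forall n, R n (s n) (s (S n)).
Proof.
  intros total.
  set (step n a := proj1_sig (constructive_indefinite_description _ (total n a))).
  exists (fix s n := match n with 0 => a0 | S n => step n (s n) end); split; auto.
  intro n; exact (proj2_sig (constructive_indefinite_description _ (total n _))).
Qed.

Lemma escaping_permutation Phi beta : is_hom Phi -> is_inj Phi -> is_cont Phi ->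
  exists f : Sinf, inK (alpha_of beta) f /\ forall m, ~ inK (beta m) (Phi f).
Proof.
  intros hom inj cont.
  (* at stage m, add a transposition making Phi escape K_(beta m) at some w, and
     freeze enough of the permutation for Phi's value at w to be final *)
  set (next m (s s' : Sinf * nat) := tr_extension (alpha_of beta) s s' /\
    exists w, escapes (beta m) (Phi (fst s')) w /\
      forall g : Sinf, (forall k, k < snd s' -> g k = fst s' k) -> Phi g w = Phi (fst s') w).
  assert (next_total : forall m s, exists s', next m s s').
  { intros m [P L].
    destruct (stage Phi beta (Phi P) m L hom inj cont) as (c & d & w & hc & hd & had & esc).
    destruct (cont (compS P (trS c d)) w) as [N HN].
    exists (compS P (trS c d), S d + N); split; [exists c, d; cbn; repeat split; auto; lia|].
    exists w; split.
    - unfold escapes; cbn; now rewrite Phi_comp.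
    - intros g hg; apply HN; intros k hk; apply hg; cbn; lia. }
  destruct (dependent_choice next (idS, 0) next_total) as (s & s0 & s_next).
  destruct (extension_limit (alpha_of beta) s) as (f & fK & f_agree); auto.
  - intro x; unfold alpha_of; lia.
  - intro m; apply s_next.
  - exists f; split; auto; intro m.
    destruct (s_next m) as [_ (w & esc & freeze)].
    apply (escapes_not_inK _ _ w); unfold escapes.
    rewrite (freeze f (f_agree (S m))); exact esc.
Qed.

Theorem mainTheorem11 (beta : nat -> nat -> nat) :
  exists alpha : nat -> nat,
    forall Phi : Sinf -> Sinf,
      is_hom Phi -> is_inj Phi -> is_cont Phi ->
      ~ (forall f : Sinf, inK alpha f -> exists m : nat, inK (beta m) (Phi f)).
Proof.
  exists (alpha_of beta); intros Phi hom inj cont covered.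
  destruct (escaping_permutation Phi beta hom inj cont) as (f & fK & escaping).
  destruct (covered f fK) as [m hm]; exact (escaping m hm).
Qed.
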